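(* The superalgebras $B_1$, $B_{2,\alpha}$ ($\alpha\in\mathbf{C}$) and $\widetilde{B_{2,-1}}$ are pairwise nonisomorphic; that is, no two distinct members of the family $\{B_1\}\cup\{B_{2,\alpha}:\alpha\in\mathbf{C}\}\cup\{\widetilde{B_{2,-1}}\}$ are isomorphic.
   Context: Isomorphisms are even bijective linear maps preserving the product. All superalgebras below live on the superspace with ordered basis $(x_1,x_2,x_3,x_4,y_1,y_2,y_3,y_4)$ ($x_i$ even, $y_j$ odd), and are given by left multiplication matrices $L(a)$, whose $j$-th column is the coordinate vector of $a\cdot(\text{$j$-th basis vector})$. Write $L(a)=\begin{pmatrix}P&Q\\R&S\end{pmatrix}$ with $4\times4$ blocks; for $a=x_i$, $Q=R=0$ and we list $P,S$; for $a=y_j$, $P=S=0$ and we list $Q,R$. Rows are separated by semicolons. $B_1$: $L(x_1)$: $P=[0,\tfrac12,-1,1;0,0,0,0;0,\tfrac12,0,0;0,\tfrac12,0,0]$, $S=0$. $L(x_2)$: $P=[\tfrac12,0,0,-\tfrac12;0,0,1,1;-\tfrac12,0,0,\tfrac12;\tfrac12,0,0,-\tfrac12]$, $S=0$. $L(x_3)$: $P=[1,0,1,-1;0,-1,0,0;0,0,0,1;0,0,1,0]$, $S=0$. $L(x_4)$: $P=[1,-\tfrac12,-1,-1;0,1,0,0;0,\tfrac12,1,0;0,-\tfrac12,0,1]$, $S=[2,0,0,0;-1,2,0,0;0,0,0,1;0,0,0,0]$. $L(y_1)$: $Q=[0,0,0,\tfrac14;0,0,0,0;0,0,0,-\tfrac14;0,0,0,\tfrac14]$,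 $R=[0,0,1,1;1,0,0,-1;0,0,0,0;0,0,0,0]$. $L(y_2)$: $Q=[0,0,0,-\tfrac12;0,0,0,0;0,0,0,0;0,0,0,0]$, $R=[0,1,0,0;0,0,-1,1;0,0,0,0;0,0,0,0]$. $L(y_3)$: $Q=[0,1,0,0;0,0,0,0;\tfrac12,0,0,0;\tfrac12,0,0,0]$, $R=[0,0,0,0;0,0,0,0;0,0,-1,1;0,-1,0,0]$. $L(y_4)$: $Q=[-\tfrac14,\tfrac12,0,0;1,0,0,0;\tfrac14,-\tfrac12,0,0;-\tfrac14,\tfrac12,0,0]$, $R=[0,0,0,0;0,0,0,0;-1,0,0,1;0,0,1,1]$. $B_{2,\alpha}$ ($\alpha\in\mathbf{C}$, $\beta=1+\alpha$, $\gamma=1-\alpha$): $L(x_1)$: $P=[0,0,-1,\beta;0,0,0,0;0,\beta/2,0,0;0,\tfrac12,0,0]$, $S=0$. $L(x_2)$: $P=[0,0,0,0;0,0,1,\gamma;-\gamma/2,0,0,0;\tfrac12,0,0,0]$, $S=0$. $L(x_3)$: $P=[1,0,0,0;0,-1,0,0;0,0,\alpha,\beta\gamma;0,0,1,-\alpha]$, $S=0$. $L(x_4)$: $P=[\beta,0,0,0;0,\gamma,0,0;0,0,\beta\gamma,-\alpha\beta\gamma;0,0,-\alpha,1+\alpha^2]$, $S=\mathrm{diag}(2-\alpha,2+\alpha,\alpha,-\alpha)$. $L(y_1)$: $Q=[0,0,0,0;0,0,0,\alpha\beta/4;0,0,-\alpha\gamma/4,0;0,0,\alpha/4,0]$, $R=[0,0,1,\gamma;1,0,0,0;0,0,0,0;0,0,0,0]$.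 $L(y_2)$: $Q=[0,0,-\alpha/2,0;0,0,0,0;0,0,0,-\alpha\beta/4;0,0,0,-\alpha/4]$, $R=[0,1,0,0;0,0,-1,\beta;0,0,0,0;0,0,0,0]$. $L(y_3)$: $Q=[0,1+\alpha/2,0,0;0,0,0,0;(\alpha\gamma+2)/4,0,0,0;(2-\alpha)/4,0,0,0]$, $R=[0,0,0,0;0,0,0,0;0,0,-1,\beta;0,-1,0,0]$. $L(y_4)$: $Q=[0,0,0,0;1-\alpha\beta/4,0,0,0;0,(\alpha\beta-2)/4,0,0;0,(\alpha+2)/4,0,0]$, $R=[0,0,0,0;0,0,0,0;-1,0,0,0;0,0,1,\gamma]$. $\widetilde{B_{2,-1}}$: $L(x_1)$: $P=[0,0,-1,0;0,0,0,0;0,0,0,0;0,\tfrac12,0,0]$, $S=[0,0,0,0;1,0,0,0;0,\tfrac12,0,1;-\tfrac32,0,0,0]$. $L(x_2)$: $P=[0,0,0,0;0,0,1,2;-1,0,0,0;\tfrac12,0,0,0]$, $S=[0,-1,0,-2;0,0,-2,0;0,0,0,0;0,0,3,0]$. $L(x_3)$: $P=[1,0,0,0;0,-1,0,0;0,0,-1,0;0,0,1,1]$, $S=\mathrm{diag}(-2,0,2,0)$. $L(x_4)$: $P=[0,0,0,0;0,2,0,0;0,0,0,0;0,0,1,2]$, $S=I_4$. $L(y_1)$: $Q=[0,0,0,0;0,\tfrac34,0,1;0,0,0,0;0,0,\tfrac34,0]$, $R=[0,0,-1,0;2,0,0,0;0,0,0,0;-\tfrac32,0,0,0]$. $L(y_2)$: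 $Q=[0,0,0,0;-\tfrac34,0,0,0;0,0,0,0;0,0,0,\tfrac14]$, $R=[0,0,0,0;0,0,-1,0;\tfrac12,0,0,0;0,0,0,0]$. $L(y_3)$: $Q=[0,1,0,1;0,0,0,0;\tfrac12,0,0,0;-\tfrac14,0,0,0]$, $R=[0,0,0,0;0,-2,0,0;0,0,1,2;0,2,0,0]$. $L(y_4)$: $Q=[0,0,-1,0;0,0,0,0;0,-\tfrac12,0,0;0,\tfrac14,0,0]$, $R=[0,-2,0,0;0,0,0,0;0,0,0,0;0,0,1,2]$. *)

(* Ground field: the complex numbers, rendered as R[i]
   (mathcomp-real-closed's complex numbers) for an arbitrary realType R. *)
From mathcomp Require Import all_boot all_order all_algebra.
From mathcomp Require Import reals.
From mathcomp.real_closed Require Import complex.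
Set Implicit Arguments. Unset Strict Implicit. Unset Printing Implicit Defensive.
Import GRing.Theory Num.Theory.
Local Open Scope ring_scope.

Section SuperAlg.
Variable K : fieldType.

(* coordinates w.r.t. the ordered basis (x1,x2,x3,x4,y1,y2,y3,y4) *)
Definition vec := 'cV[K]_(4 + 4).

Definition mx4 (l : seq (seq K)) : 'M[K]_4 :=
  \matrix_(i < 4, j < 4) nth 0 (nth [::] l i) j.

Definition z4 : seq (seq K) := [:: [:: 0;0;0;0]; [:: 0;0;0;0]; [:: 0;0;0;0]; [:: 0;0;0;0]].

(* left multiplication matrix for an even basis element: [[P,0],[0,S]] *)
Definition Lx (P S : seq (seq K)) : 'M[K]_(4 + 4) :=
  block_mx (mx4 P) 0 0 (mx4 S).
(* left multiplication matrix for an odd basis element: [[0,Q],[R,0]] *)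
Definition Ly (Q R : seq (seq K)) : 'M[K]_(4 + 4) :=
  block_mx 0 (mx4 Q) (mx4 R) 0.

(* A superalgebra structure on K^(4|4): L i = L(i-th basis vector);
   its j-th column is the coordinate vector of (e_i * e_j). *)
Definition superalg := 'I_(4 + 4) -> 'M[K]_(4 + 4).

Definition mk_alg (Ls : seq 'M[K]_(4 + 4)) : superalg := fun i => nth 0 Ls i.

Definition smul (A : superalg) (u v : vec) : vec :=
  \sum_(i < 4 + 4) u i 0 *: (A i *m v).

Definition is_even_idx (i : 'I_(4 + 4)) : bool := (i < 4)%N.

Definition even_mx (M : 'M[K]_(4 + 4)) : Prop :=
  forall i j, is_even_idx i != is_even_idx j -> M i j = 0.

Definition sisomorphic (A B : superalg) : Prop :=
  exists M : 'M[K]_(4 + 4),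
    [/\ M \in unitmx, even_mx M &
        forall u v : vec, M *m smul A u v = smul B (M *m u) (M *m v)].

Definition B1 : superalg := mk_alg [::
  Lx [:: [:: 0; 1/2; -1; 1]; [:: 0;0;0;0]; [:: 0; 1/2; 0; 0]; [:: 0; 1/2; 0; 0]] z4;
  Lx [:: [:: 1/2; 0; 0; -(1/2)]; [:: 0; 0; 1; 1]; [:: -(1/2); 0; 0; 1/2]; [:: 1/2; 0; 0; -(1/2)]] z4;
  Lx [:: [:: 1; 0; 1; -1]; [:: 0; -1; 0; 0]; [:: 0; 0; 0; 1]; [:: 0; 0; 1; 0]] z4;
  Lx [:: [:: 1; -(1/2); -1; -1]; [:: 0; 1; 0; 0]; [:: 0; 1/2; 1; 0]; [:: 0; -(1/2); 0; 1]]
     [:: [:: 2; 0; 0; 0]; [:: -1; 2; 0; 0]; [:: 0; 0; 0; 1]; [:: 0; 0; 0; 0]];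
  Ly [:: [:: 0; 0; 0; 1/4]; [:: 0;0;0;0]; [:: 0; 0; 0; -(1/4)]; [:: 0; 0; 0; 1/4]]
     [:: [:: 0; 0; 1; 1]; [:: 1; 0; 0; -1]; [:: 0;0;0;0]; [:: 0;0;0;0]];
  Ly [:: [:: 0; 0; 0; -(1/2)]; [:: 0;0;0;0]; [:: 0;0;0;0]; [:: 0;0;0;0]]
     [:: [:: 0; 1; 0; 0]; [:: 0; 0; -1; 1]; [:: 0;0;0;0]; [:: 0;0;0;0]];
  Ly [:: [:: 0; 1; 0; 0]; [:: 0;0;0;0]; [:: 1/2; 0; 0; 0]; [:: 1/2; 0; 0; 0]]
     [:: [:: 0;0;0;0]; [:: 0;0;0;0]; [:: 0; 0; -1; 1]; [:: 0; -1; 0; 0]];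
  Ly [:: [:: -(1/4); 1/2; 0; 0]; [:: 1; 0; 0; 0]; [:: 1/4; -(1/2); 0; 0]; [:: -(1/4); 1/2; 0; 0]]
     [:: [:: 0;0;0;0]; [:: 0;0;0;0]; [:: -1; 0; 0; 1]; [:: 0; 0; 1; 1]]
].

Definition B2 (a : K) : superalg :=
  let b := 1 + a in let c := 1 - a in mk_alg [::
  Lx [:: [:: 0; 0; -1; b]; [:: 0;0;0;0]; [:: 0; b/2; 0; 0]; [:: 0; 1/2; 0; 0]] z4;
  Lx [:: [:: 0;0;0;0]; [:: 0; 0; 1; c]; [:: -(c/2); 0; 0; 0]; [:: 1/2; 0; 0; 0]] z4;
  Lx [:: [:: 1; 0; 0; 0]; [:: 0; -1; 0; 0]; [:: 0; 0; a; b * c]; [:: 0; 0; 1; -a]] z4;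
  Lx [:: [:: b; 0; 0; 0]; [:: 0; c; 0; 0]; [:: 0; 0; b * c; -(a * b * c)]; [:: 0; 0; -a; 1 + a ^+ 2]]
     [:: [:: 2 - a; 0; 0; 0]; [:: 0; 2 + a; 0; 0]; [:: 0; 0; a; 0]; [:: 0; 0; 0; -a]];
  Ly [:: [:: 0;0;0;0]; [:: 0; 0; 0; a * b / 4]; [:: 0; 0; -(a * c / 4); 0]; [:: 0; 0; a / 4; 0]]
     [:: [:: 0; 0; 1; c]; [:: 1; 0; 0; 0]; [:: 0;0;0;0]; [:: 0;0;0;0]];
  Ly [:: [:: 0; 0; -(a / 2); 0]; [:: 0;0;0;0]; [:: 0; 0; 0; -(a * b / 4)]; [:: 0; 0; 0; -(a / 4)]]
     [:: [:: 0; 1; 0; 0]; [:: 0; 0; -1; b]; [:: 0;0;0;0]; [:: 0;0;0;0]];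
  Ly [:: [:: 0; 1 + a / 2; 0; 0]; [:: 0;0;0;0]; [:: (a * c + 2) / 4; 0; 0; 0]; [:: (2 - a) / 4; 0; 0; 0]]
     [:: [:: 0;0;0;0]; [:: 0;0;0;0]; [:: 0; 0; -1; b]; [:: 0; -1; 0; 0]];
  Ly [:: [:: 0;0;0;0]; [:: 1 - a * b / 4; 0; 0; 0]; [:: 0; (a * b - 2) / 4; 0; 0]; [:: 0; (a + 2) / 4; 0; 0]]
     [:: [:: 0;0;0;0]; [:: 0;0;0;0]; [:: -1; 0; 0; 0]; [:: 0; 0; 1; c]]
].

Definition B2t : superalg := mk_alg [::
  Lx [:: [:: 0; 0; -1; 0]; [:: 0;0;0;0]; [:: 0;0;0;0]; [:: 0; 1/2; 0; 0]]
     [:: [:: 0;0;0;0]; [:: 1; 0; 0; 0]; [:: 0; 1/2; 0; 1]; [:: -(3/2); 0; 0; 0]];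
  Lx [:: [:: 0;0;0;0]; [:: 0; 0; 1; 2]; [:: -1; 0; 0; 0]; [:: 1/2; 0; 0; 0]]
     [:: [:: 0; -1; 0; -2]; [:: 0; 0; -2; 0]; [:: 0;0;0;0]; [:: 0; 0; 3; 0]];
  Lx [:: [:: 1; 0; 0; 0]; [:: 0; -1; 0; 0]; [:: 0; 0; -1; 0]; [:: 0; 0; 1; 1]]
     [:: [:: -2; 0; 0; 0]; [:: 0;0;0;0]; [:: 0; 0; 2; 0]; [:: 0;0;0;0]];
  Lx [:: [:: 0;0;0;0]; [:: 0; 2; 0; 0]; [:: 0;0;0;0]; [:: 0; 0; 1; 2]]
     [:: [:: 1; 0; 0; 0]; [:: 0; 1; 0; 0]; [:: 0; 0; 1; 0]; [:: 0; 0; 0; 1]];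
  Ly [:: [:: 0;0;0;0]; [:: 0; 3/4; 0; 1]; [:: 0;0;0;0]; [:: 0; 0; 3/4; 0]]
     [:: [:: 0; 0; -1; 0]; [:: 2; 0; 0; 0]; [:: 0;0;0;0]; [:: -(3/2); 0; 0; 0]];
  Ly [:: [:: 0;0;0;0]; [:: -(3/4); 0; 0; 0]; [:: 0;0;0;0]; [:: 0; 0; 0; 1/4]]
     [:: [:: 0;0;0;0]; [:: 0; 0; -1; 0]; [:: 1/2; 0; 0; 0]; [:: 0;0;0;0]];
  Ly [:: [:: 0; 1; 0; 1]; [:: 0;0;0;0]; [:: 1/2; 0; 0; 0]; [:: -(1/4); 0; 0; 0]]
     [:: [:: 0;0;0;0]; [:: 0; -2; 0; 0]; [:: 0; 0; 1; 2]; [:: 0; 2; 0; 0]];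
  Ly [:: [:: 0; 0; -1; 0]; [:: 0;0;0;0]; [:: 0; -(1/2); 0; 0]; [:: 0; 1/4; 0; 0]]
     [:: [:: 0; -2; 0; 0]; [:: 0;0;0;0]; [:: 0;0;0;0]; [:: 0; 0; 1; 2]]
].

Inductive member := MB1 | MB2 of K | MB2t.

Definition alg_of (m : member) : superalg :=
  match m with MB1 => B1 | MB2 a => B2 a | MB2t => B2t end.

End SuperAlg.

From mathcomp Require Import all_boot all_order all_algebra.
From mathcomp Require Import reals.
From mathcomp.real_closed Require Import complex.
From mathcomp Require Import ring.
Set Implicit Arguments. Unset Strict Implicit. Unset Printing Implicit Defensive.
Import GRing.Theory Num.Theory.
Local Open Scope ring_scope.

(* Each member has a unique even right unit e (x1 + x4, a x3 + x4 and x4 - x3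
   respectively), so an isomorphism M maps e to e and conjugates the left
   multiplications L(e).  These are block diagonal, and the trace of the square
   of the even block, 4 + 8 k with k = 0, a^2, 1, separates every pair except
   B1 / B(2,0), B(2,a) / B(2,-a) and B(2,1), B(2,-1) / ~B(2,-1).  In these cases
   the intertwining relation kills most entries of M, and one or two entries of
   the multiplicativity condition then leave M with a zero row, contradicting
   invertibility.  Isomorphism being symmetric, only one direction of each pair
   is needed. *)

Arguments Lx : simpl never.
Arguments Ly : simpl never.

Notation o8 n := (@Ordinal 8 n isT).

Section Superalgebras.
Variable K : fieldType.
Implicit Types (A B : superalg K) (M : 'M[K]_(4 + 4)) (u v e : vec K).

Lemma big_ord8 (F : 'I_8 -> K) : \sum_(i < 8) F i =
  F (o8 0) + F (o8 1) + F (o8 2) + F (o8 3) + F (o8 4) + F (o8 5) + F (o8 6) + F (o8 7).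
Proof. by rewrite !big_ord_recl big_ord0 addr0 !addrA; repeat f_equal; apply: val_inj. Qed.

Lemma big_ord4 (F : 'I_4 -> K) : \sum_(i < 4) F i =
  F (@Ordinal 4 0 isT) + F (@Ordinal 4 1 isT) + F (@Ordinal 4 2 isT) + F (@Ordinal 4 3 isT).
Proof. by rewrite !big_ord_recl big_ord0 addr0 !addrA; repeat f_equal; apply: val_inj. Qed.

Lemma forall_ord8 (P : 'I_8 -> Prop) : P (o8 0) -> P (o8 1) -> P (o8 2) -> P (o8 3) ->
  P (o8 4) -> P (o8 5) -> P (o8 6) -> P (o8 7) -> forall i, P i.
Proof.
move=> ? ? ? ? ? ? ? ? [[|[|[|[|[|[|[|[|i]]]]]]]] lti] //.
all: by rewrite (bool_irrelevance lti isT).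
Qed.

Lemma LxE (P S : seq (seq K)) (i j : 'I_(4 + 4)) : Lx P S i j =
  if (i < 4)%N then (if (j < 4)%N then nth 0 (nth [::] P i) j else 0)
  else (if (j < 4)%N then 0 else nth 0 (nth [::] S (i - 4)) (j - 4)).
Proof.
rewrite /Lx /block_mx /col_mx /row_mx !mxE.
case: splitP => i' Hi; rewrite !mxE; case: splitP => j' Hj; rewrite ?mxE.
all: by rewrite ?Hi ?Hj ?addKn.
Qed.

Lemma LyE (Q R : seq (seq K)) (i j : 'I_(4 + 4)) : Ly Q R i j =
  if (i < 4)%N then (if (j < 4)%N then 0 else nth 0 (nth [::] Q i) (j - 4))
  else (if (j < 4)%N then nth 0 (nth [::] R (i - 4)) j else 0).
Proof.
rewrite /Ly /block_mx /col_mx /row_mx !mxE.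
case: splitP => i' Hi; rewrite !mxE; case: splitP => j' Hj; rewrite ?mxE.
all: by rewrite ?Hi ?Hj ?addKn.
Qed.

Definition vec_of (l : seq K) : vec K := \col_i nth 0 l i.

Lemma vec_ofE l i j : vec_of l i j = nth 0 l i.
Proof. by rewrite mxE. Qed.

Lemma vec_ofP v l : (forall k, v k 0 = nth 0 l k) -> v = vec_of l.
Proof. by move=> vE; apply/matrixP => i j; rewrite [j]ord1 mxE vE. Qed.

Lemma eq_mulmx_cV m n (X Y : 'M[K]_(m, n)) :
  (forall v : 'cV_n, X *m v = Y *m v) -> X = Y.
Proof.
move=> XY; apply/matrixP => i j.
by have := congr1 (fun w : 'cV_m => w i 0) (XY (delta_mx j 0)); rewrite -!colE !mxE.
Qed.

Definition lmulmx A u : 'M[K]_(4 + 4) := \sum_i u i 0 *: A i.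

Lemma lmulmxE A u i j : lmulmx A u i j = \sum_k u k 0 * A k i j.
Proof. by rewrite summxE; apply: eq_bigr => k _; rewrite mxE. Qed.

Lemma smulE A u v : smul A u v = lmulmx A u *m v.
Proof. by rewrite /smul mulmx_suml; apply: eq_bigr => i _; rewrite scalemxAl. Qed.

Lemma lmulmx_delta A i : lmulmx A (delta_mx i 0) = A i.
Proof.
rewrite /lmulmx (bigD1 i) //= big1 ?addr0 => [|j /negbTE ji]; rewrite mxE.
  by rewrite !eqxx scale1r.
by rewrite ji scale0r.
Qed.

Definition right_unit A e := forall z, smul A z e = z.

Lemma right_unitP A e :
  right_unit A e <-> forall p k, \sum_q A p k q * e q 0 = (k == p)%:R.
Proof.
split=> [eR p k | eE z].
  have := congr1 (fun w : vec K => w k 0) (eR (delta_mx p 0)).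
  by rewrite smulE lmulmx_delta !mxE eqxx andbT.
rewrite smulE; apply/matrixP => i j; rewrite [j]ord1 !mxE.
under eq_bigr => l _ do rewrite lmulmxE mulr_suml.
rewrite exchange_big /=.
under eq_bigr => k _ do rewrite -(eq_bigr _ (fun l _ => mulrA _ _ _)) -mulr_sumr eE.
rewrite (bigD1 i) //= eqxx mulr1 big1 ?addr0 // => k /negbTE ki.
by rewrite eq_sym ki mulr0.
Qed.

Definition even_vec e := forall k : 'I_(4 + 4), (4 <= k)%N -> e k 0 = 0.

Lemma even_mx_vec M e : even_mx M -> even_vec e -> even_vec (M *m e).
Proof.
move=> Mev eev k k4; rewrite !mxE big1 // => l _.
case: (ltnP l 4) => l4; last by rewrite eev ?mulr0.
by rewrite Mev ?mul0r //= /is_even_idx l4 ltnNge k4.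
Qed.

Lemma even_mx_block M : even_mx M -> M = block_mx (ulsubmx M) 0 0 (drsubmx M).
Proof.
move=> Mev; rewrite -{1}(submxK M); congr block_mx; apply/matrixP => i j; rewrite !mxE.
all: by apply: Mev; rewrite /is_even_idx /= ?ltn_ord ?ltnNge ?leq_addr.
Qed.

Lemma even_block_diag (X Y : 'M[K]_4) : even_mx (block_mx X 0 0 Y).
Proof.
move=> i j; rewrite /is_even_idx.
case: split_ordP => i' ->; case: split_ordP => j' ->;
  rewrite /= ?ltn_ord ?ltnNge ?leq_addr //= => _.
  by rewrite block_mxEur mxE.
by rewrite block_mxEdl mxE.
Qed.

Lemma even_mx_inv M : M \in unitmx -> even_mx M -> even_mx (invmx M).
Proof.
move=> Mu Mev; rewrite (even_mx_block Mev) invmx_block_diag; first exact: even_block_diag.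
by rewrite -(even_mx_block Mev).
Qed.

Lemma unitmx_row_neq0 M i : M \in unitmx -> ~ (forall j, M i j = 0).
Proof.
move=> Mu Mi0; have := congr1 (fun X : 'M[K]_(4 + 4) => X i i) (mulmxV Mu).
rewrite !mxE eqxx big1 => [/eqP|j _]; first by rewrite eq_sym oner_eq0.
by rewrite Mi0 mul0r.
Qed.

Definition siso A B M :=
  [/\ M \in unitmx, even_mx M &
      forall u v, M *m smul A u v = smul B (M *m u) (M *m v)].

Lemma siso_sym A B M : siso A B M -> siso B A (invmx M).
Proof.
case=> Mu Mev Mmul; split; [by rewrite unitmx_inv | exact: even_mx_inv |].
move=> u v; rewrite -{1}(mulKVmx Mu u) -{1}(mulKVmx Mu v) -Mmul.
by rewrite mulKmx.
Qed.

Lemma siso_lmulmx A B M u : siso A B M -> M *m lmulmx A u = lmulmx B (M *m u) *m M.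
Proof.
case=> _ _ Mmul; apply: eq_mulmx_cV => v.
by rewrite -mulmxA -smulE Mmul smulE mulmxA.
Qed.

(* Entry (k, j) of M L(e_i) = L(M e_i) M. *)
Lemma siso_mulE A B M i j k : siso A B M ->
  \sum_l M k l * A i l j = \sum_l (\sum_p M p i * B p k l) * M l j.
Proof.
move=> isoM; have := congr1 (fun X : 'M[K]_(4 + 4) => X k j) (siso_lmulmx (delta_mx i 0) isoM).
rewrite lmulmx_delta !mxE => ->; apply: eq_bigr => l _; congr (_ * _).
rewrite lmulmxE; apply: eq_bigr => p _; rewrite !mxE.
congr (_ * _); rewrite (bigD1 i) //= big1 ?addr0 ?mxE ?eqxx ?mulr1 //.
by move=> r /negbTE ri; rewrite mxE ri mulr0.
Qed.

Lemma siso_right_unit A B M e : siso A B M -> right_unit A e -> right_unit B (M *m e).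
Proof.
case=> Mu _ Mmul eR z.
by rewrite -(mulKVmx Mu z) -Mmul eR.
Qed.

(* M eA is an even right unit of B, hence equals eB. *)
Lemma siso_intertwine A B M eA eB : siso A B M -> right_unit A eA -> even_vec eA ->
  (forall e, right_unit B e -> even_vec e -> e = eB) ->
  M *m lmulmx A eA = lmulmx B eB *m M.
Proof.
move=> isoM eAR eAev eBuniq.
have <- : M *m eA = eB.
  by apply: eBuniq; [exact: siso_right_unit eAR | case: isoM => _ Mev _; exact: even_mx_vec].
exact: siso_lmulmx.
Qed.

Lemma mxtrace_sqr_conj n (X C D : 'M[K]_n) : X \in unitmx -> X *m C = D *m X ->
  \tr (C *m C) = \tr (D *m D).
Proof.
move=> Xu XC; have -> : C = invmx X *m (D *m X) by rewrite -XC mulKmx.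
by rewrite !mulmxA mulmxK // mxtrace_mulC !mulmxA mulmxV // mul1mx.
Qed.

Definition tr_sqr (l : seq (seq K)) := \tr (mx4 l *m mx4 l).

Lemma intertwine_Lx_tr_sqr M (P S P' S' : seq (seq K)) : M \in unitmx -> even_mx M ->
  M *m Lx P S = Lx P' S' *m M -> tr_sqr P = tr_sqr P'.
Proof.
move=> + Mev; rewrite (even_mx_block Mev) /Lx !mulmx_block !(mul0mx, mulmx0, addr0, add0r).
rewrite block_diag_mx_unit => /andP[Xu _] /eq_block_mx[XP _ _ _].
exact: mxtrace_sqr_conj XP.
Qed.

(* Entries indexed by plain numerals, which [/=] leaves alone. *)
Definition mxat M (p q : nat) := M (inord p) (inord q).

Lemma even_mx_ord8 M p q (ltp : (p < 8)%N) (ltq : (q < 8)%N) : even_mx M ->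
  M (Ordinal ltp) (Ordinal ltq) = if (p < 4)%N == (q < 4)%N then mxat M p q else 0.
Proof.
move=> Mev; rewrite /mxat.
have -> : inord p = Ordinal ltp :> 'I_(4 + 4) by apply: val_inj; rewrite /= inordK.
have -> : inord q = Ordinal ltq :> 'I_(4 + 4) by apply: val_inj; rewrite /= inordK.
by case: eqP => // /eqP ne; apply: Mev.
Qed.

End Superalgebras.

Arguments mxat : simpl never.

(* An unknown x is solved from an equation L = R by exhibiting a combination
   with c * (x - y) = L - R, which [field] checks. *)
Lemma eq_of_scaled_diff (K : fieldType) (x y c L R : K) :
  c != 0 -> L = R -> c * (x - y) = L - R -> x = y.
Proof.
move=> c0 ->; rewrite subrr => /eqP; rewrite mulf_eq0 (negbTE c0) /= subr_eq0.
by move/eqP.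
Qed.
Arguments eq_of_scaled_diff {K x y} c {L R}.

Ltac field_num := field; rewrite ?pnatr_eq0 //.
Ltac nonzero := solve [repeat first
  [ done | apply: mulf_neq0 | rewrite oppr_eq0 | rewrite invr_eq0 | rewrite oner_eq0
  | rewrite pnatr_eq0 ]].
Tactic Notation "by_lincomb" uconstr(c) uconstr(E) :=
  match goal with |- @eq ?T _ _ =>
    refine (eq_of_scaled_diff (c : T) _ (E : @eq T _ _) _); [nonzero | field_num]
  end.

Ltac entrywise := apply: forall_ord8; apply: forall_ord8;
  rewrite ?LxE ?LyE /= ?(mul0r, mulr0, add0r, addr0, mul1r, mulr1) //; field_num.

Section Members.
Variable K : numFieldType.
Implicit Types (m : member K) (M : 'M[K]_(4 + 4)).

Definition unit_vec m : vec K :=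
  match m with
  | MB1 => vec_of [:: 1; 0; 0; 1; 0; 0; 0; 0]
  | MB2 a => vec_of [:: 0; 0; a; 1; 0; 0; 0; 0]
  | MB2t => vec_of [:: 0; 0; -1; 1; 0; 0; 0; 0]
  end.

Definition unit_blocks m : seq (seq K) * seq (seq K) :=
  match m with
  | MB1 => ([:: [:: 1; 0; -2; 0]; [:: 0; 1; 0; 0]; [:: 0; 1; 1; 0]; [:: 0; 0; 0; 1]],
            [:: [:: 2; 0; 0; 0]; [:: -1; 2; 0; 0]; [:: 0; 0; 0; 1]; [:: 0; 0; 0; 0]])
  | MB2 a => ([:: [:: 1 + 2 * a; 0; 0; 0]; [:: 0; 1 - 2 * a; 0; 0]; [:: 0; 0; 1; 0]; [:: 0; 0; 0; 1]],
              [:: [:: 2 - a; 0; 0; 0]; [:: 0; 2 + a; 0; 0]; [:: 0; 0; a; 0]; [:: 0; 0; 0; -a]])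
  | MB2t => ([:: [:: -1; 0; 0; 0]; [:: 0; 3; 0; 0]; [:: 0; 0; 1; 0]; [:: 0; 0; 0; 1]],
             [:: [:: 3; 0; 0; 0]; [:: 0; 1; 0; 0]; [:: 0; 0; -1; 0]; [:: 0; 0; 0; 1]])
  end.

Lemma lmulmx_unit_vec m :
  lmulmx (alg_of m) (unit_vec m) = Lx (unit_blocks m).1 (unit_blocks m).2.
Proof.
apply/matrixP => i j; rewrite lmulmxE big_ord8.
case: m => [|a|]; rewrite /= !vec_ofE /= ?(mul0r, add0r, addr0, mul1r).
- by rewrite /B1 /mk_alg /=; move: i j; entrywise.
- by rewrite /B2 /mk_alg /=; move: i j; entrywise.
- by rewrite /B2t /mk_alg /=; move: i j; entrywise.
Qed.

Lemma right_unit_member m : right_unit (alg_of m) (unit_vec m).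
Proof.
apply/right_unitP => k i; rewrite big_ord8.
case: m => [|a|]; rewrite /= !vec_ofE /= ?(mulr0, add0r, addr0, mulr1).
- by rewrite /B1 /mk_alg /=; move: k i; entrywise.
- by rewrite /B2 /mk_alg /=; move: k i; entrywise.
- by rewrite /B2t /mk_alg /=; move: k i; entrywise.
Qed.

Lemma even_unit_vec m : even_vec (unit_vec m).
Proof. by case: m => [|a|]; apply: forall_ord8 => // _; rewrite vec_ofE. Qed.

Lemma right_unit_member_uniq m e :
  right_unit (alg_of m) e -> even_vec e -> e = unit_vec m.
Proof.
move=> /right_unitP eE eev.
case: m eE => [|a|] /= eE; apply: vec_ofP; rewrite /B1 /B2 /B2t /mk_alg in eE.
- have E00 := eE (o8 0) (o8 0); have E02 := eE (o8 0) (o8 2).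
  have E10 := eE (o8 1) (o8 0); have E11 := eE (o8 1) (o8 1).
  rewrite !big_ord8 /= !LxE /= ?(mul0r, add0r, addr0) in E00 E02 E10 E11.
  apply: forall_ord8 => /=; try by rewrite eev.
  + by_lincomb 2 (f_equal2 (fun p q => 4 * p + q) E10
      (f_equal2 (fun p q => p + q) E00 (f_equal2 (fun p q => p - q) E11 E02))).
  + by_lincomb (1 / 2) E02.
  + by_lincomb 2 (f_equal2 (fun p q => p + q) E11
      (f_equal2 (fun p q => q - p) E00 E02)).
  + by_lincomb 2 (f_equal2 (fun p q => p + q) E00
      (f_equal2 (fun p q => p - q) E11 E02)).
- have E00 := eE (o8 0) (o8 0); have E03 := eE (o8 0) (o8 3).
  have E11 := eE (o8 1) (o8 1); have E13 := eE (o8 1) (o8 3).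
  rewrite !big_ord8 /= !LxE /= ?(mul0r, add0r, addr0) in E00 E03 E11 E13.
  apply: forall_ord8 => /=; try by rewrite eev.
  + by_lincomb (1 / 2) E13.
  + by_lincomb (1 / 2) E03.
  + by_lincomb 2 (f_equal2 (fun p q => (1 + a) * q - (1 - a) * p) E00 E11).
  + by_lincomb 2 (f_equal2 (fun p q => p + q) E00 E11).
- have E00 := eE (o8 0) (o8 0); have E03 := eE (o8 0) (o8 3).
  have E11 := eE (o8 1) (o8 1); have E13 := eE (o8 1) (o8 3).
  rewrite !big_ord8 /= !LxE /= ?(mul0r, add0r, addr0) in E00 E03 E11 E13.
  apply: forall_ord8 => /=; try by rewrite eev.
  + by_lincomb (1 / 2) E13.
  + by_lincomb (1 / 2) E03.
  + by_lincomb (-1) E00.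
  + by_lincomb 2 (f_equal2 (fun p q => p + q) E11 E00).
Qed.

Lemma siso_intertwine_units m1 m2 M : siso (alg_of m1) (alg_of m2) M ->
  M *m Lx (unit_blocks m1).1 (unit_blocks m1).2 = Lx (unit_blocks m2).1 (unit_blocks m2).2 *m M.
Proof.
move=> isoM; rewrite -!lmulmx_unit_vec.
apply: (siso_intertwine isoM (right_unit_member m1) (even_unit_vec m1)).
exact: right_unit_member_uniq.
Qed.

Definition unit_invariant m : K :=
  match m with MB1 => 0 | MB2 a => a ^+ 2 | MB2t => 1 end.

Lemma tr_sqr_unit_block m : tr_sqr (unit_blocks m).1 = 4 + 8 * unit_invariant m.
Proof.
by case: m => [|a|]; rewrite /tr_sqr /mxtrace big_ord4 !mxE !big_ord4 !mxE /=; ring.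
Qed.

Lemma siso_unit_invariant m1 m2 M : siso (alg_of m1) (alg_of m2) M ->
  unit_invariant m1 = unit_invariant m2.
Proof.
move=> isoM; case: (isoM) => Mu Mev _.
move: (intertwine_Lx_tr_sqr Mu Mev (siso_intertwine_units isoM)).
by rewrite !tr_sqr_unit_block => /addrI /mulfI; apply; rewrite pnatr_eq0.
Qed.

End Members.

Tactic Notation "intertwine_at" constr(H) constr(Mev) constr(i) constr(j) "as" ident(E) :=
  move/matrixP/(_ i j): (H) => E;
  rewrite !mxE !big_ord8 /= ?LxE /= !(even_mx_ord8 _ _ Mev) /=
    ?(mul0r, mulr0, add0r, addr0, mul1r, mulr1) in E.

Tactic Notation "product_at" constr(isoM) constr(Mev) constr(i) constr(j) constr(k) "as" ident(E) :=
  move: (siso_mulE i j k isoM) => E;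
  rewrite !big_ord8 !(even_mx_ord8 _ _ Mev) /= ?(mul0r, mulr0, add0r, addr0) in E;
  rewrite /B1 /B2 /B2t /mk_alg /= ?LxE ?LyE /= ?(mul0r, mulr0, add0r, addr0, mul1r, mulr1) in E.

Section ExceptionalPairs.
Variable K : numFieldType.
Implicit Types (M : 'M[K]_(4 + 4)).

Lemma not_siso_B20_B1 M : ~ siso (B2 0) (B1 K) M.
Proof.
move=> isoM; have H := @siso_intertwine_units K (MB2 0) (MB1 K) M isoM.
case: isoM => Mu Mev _.
intertwine_at H Mev (o8 0) (o8 0) as E0; intertwine_at H Mev (o8 0) (o8 1) as E1.
intertwine_at H Mev (o8 0) (o8 2) as E2; intertwine_at H Mev (o8 0) (o8 3) as E3.
apply: (unitmx_row_neq0 (i := o8 2) Mu); apply: forall_ord8; rewrite (even_mx_ord8 _ _ Mev) //=.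
- by_lincomb 2 E0.
- by_lincomb 2 E1.
- by_lincomb 2 E2.
- by_lincomb 2 E3.
Qed.

Lemma not_siso_B2_B2N_neqN1 (a : K) M : a != 0 -> 1 + a != 0 -> ~ siso (B2 a) (B2 (- a)) M.
Proof.
move=> a0 a1 isoM; have H := @siso_intertwine_units K (MB2 a) (MB2 (- a)) M isoM.
case: (isoM) => Mu Mev _.
intertwine_at H Mev (o8 4) (o8 6) as E46; intertwine_at H Mev (o8 7) (o8 5) as E75.
intertwine_at H Mev (o8 1) (o8 1) as E11; intertwine_at H Mev (o8 1) (o8 2) as E12.
intertwine_at H Mev (o8 1) (o8 3) as E13.
product_at isoM Mev (o8 6) (o8 5) (o8 1) as P1; product_at isoM Mev (o8 5) (o8 6) (o8 1) as P2.
have z46 : mxat M 4 6 = 0 by by_lincomb (-2) E46.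
have z75 : mxat M 7 5 = 0 by by_lincomb 2 E75.
have z11 : mxat M 1 1 = 0 by by_lincomb (- (4 * a)) E11.
have z12 : mxat M 1 2 = 0 by by_lincomb (- (2 * a)) E12.
have z13 : mxat M 1 3 = 0 by by_lincomb (- (2 * a)) E13.
rewrite z46 z75 ?(mul0r, mulr0, addr0, add0r) in P1 P2.
have z10 : mxat M 1 0 = 0.
  by by_lincomb (a * (1 + a) / 4)
    (f_equal2 (fun p q => (- a * (1 - a) / 4) * p - (1 - (- a * (1 - a) / 4)) * q) P1 P2).
apply: (unitmx_row_neq0 (i := o8 1) Mu).
by apply: forall_ord8; rewrite (even_mx_ord8 _ _ Mev) //=.
Qed.

Lemma not_siso_B21_B2t M : ~ siso (B2 1) (B2t K) M.
Proof.
move=> isoM; have H := @siso_intertwine_units K (MB2 1) (MB2t K) M isoM.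
case: (isoM) => Mu Mev _.
intertwine_at H Mev (o8 0) (o8 0) as E00; intertwine_at H Mev (o8 2) (o8 1) as E21.
intertwine_at H Mev (o8 2) (o8 0) as E20; intertwine_at H Mev (o8 6) (o8 5) as E65.
intertwine_at H Mev (o8 7) (o8 5) as E75.
product_at isoM Mev (o8 1) (o8 0) (o8 2) as P1; product_at isoM Mev (o8 5) (o8 7) (o8 2) as P2.
have z00 : mxat M 0 0 = 0 by by_lincomb 4 E00.
have z21 : mxat M 2 1 = 0 by by_lincomb (-2) E21.
have z20 : mxat M 2 0 = 0 by by_lincomb 2 E20.
have z65 : mxat M 6 5 = 0 by by_lincomb 4 E65.
have z75 : mxat M 7 5 = 0 by by_lincomb 2 E75.
rewrite z00 z21 z20 z65 z75 ?(mul0r, mulr0, addr0, add0r) in P1 P2.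
have z23 : mxat M 2 3 = 0 by by_lincomb (1 / 2) P1.
rewrite z23 ?(mul0r, mulr0, addr0, add0r) in P2.
have z22 : mxat M 2 2 = 0 by by_lincomb (- (1 / 2)) P2.
apply: (unitmx_row_neq0 (i := o8 2) Mu).
by apply: forall_ord8; rewrite (even_mx_ord8 _ _ Mev) //=.
Qed.

Lemma not_siso_B2N1_B2t M : ~ siso (B2 (-1)) (B2t K) M.
Proof.
move=> isoM; have H := @siso_intertwine_units K (MB2 (-1)) (MB2t K) M isoM.
case: (isoM) => Mu Mev _.
intertwine_at H Mev (o8 1) (o8 0) as E10; intertwine_at H Mev (o8 2) (o8 0) as E20.
intertwine_at H Mev (o8 6) (o8 4) as E64; intertwine_at H Mev (o8 7) (o8 4) as E74.
intertwine_at H Mev (o8 2) (o8 1) as E21.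
product_at isoM Mev (o8 0) (o8 1) (o8 2) as P1; product_at isoM Mev (o8 4) (o8 6) (o8 2) as P2.
have z10 : mxat M 1 0 = 0 by by_lincomb (-4) E10.
have z20 : mxat M 2 0 = 0 by by_lincomb (-2) E20.
have z64 : mxat M 6 4 = 0 by by_lincomb 4 E64.
have z74 : mxat M 7 4 = 0 by by_lincomb 2 E74.
have z21 : mxat M 2 1 = 0 by by_lincomb 2 E21.
rewrite z10 z20 z64 z74 ?(mul0r, mulr0, addr0, add0r) in P1 P2.
have z23 : mxat M 2 3 = 0 by by_lincomb (1 / 2) P1.
rewrite z23 ?(mul0r, mulr0, addr0, add0r) in P2.
have z22 : mxat M 2 2 = 0 by by_lincomb (1 / 2) P2.
apply: (unitmx_row_neq0 (i := o8 2) Mu).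
by apply: forall_ord8; rewrite (even_mx_ord8 _ _ Mev) //=.
Qed.

Lemma not_siso_B2_B2N (a : K) M : a != 0 -> ~ siso (B2 a) (B2 (- a)) M.
Proof.
move=> a0 isoM; have [a1|a1] := eqVneq (1 + a) 0; last first.
  exact: not_siso_B2_B2N_neqN1 a0 a1 isoM.
have am1 : a = -1 by apply/eqP; rewrite -addr_eq0 addrC a1.
move: (siso_sym isoM); rewrite am1 opprK; apply: not_siso_B2_B2N_neqN1.
  by rewrite oner_eq0.
by rewrite -mulr2n pnatr_eq0.
Qed.

Lemma not_siso_B2_B2t (a : K) M : a ^+ 2 = 1 -> ~ siso (B2 a) (B2t K) M.
Proof.
move/eqP; rewrite sqrf_eq1 => /orP[] /eqP ->.
  exact: not_siso_B21_B2t.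
exact: not_siso_B2N1_B2t.
Qed.

End ExceptionalPairs.

Theorem theorem3p6 (R : realType) (m1 m2 : member R[i]) :
  m1 <> m2 -> ~ sisomorphic (alg_of m1) (alg_of m2).
Proof.
move=> m12 [M isoM]; have isoM' := siso_sym isoM.
have := siso_unit_invariant isoM.
case: m1 m2 m12 isoM isoM' => [|a|] [|b|] m12 //= isoM isoM'.
- move/esym/eqP; rewrite sqrf_eq0 => /eqP b0.
  by rewrite b0 in isoM'; apply: not_siso_B20_B1 isoM'.
- by move/eqP; rewrite eq_sym oner_eq0.
- move/eqP; rewrite sqrf_eq0 => /eqP a0.
  by rewrite a0 in isoM; apply: not_siso_B20_B1 isoM.
- move/eqP; rewrite eqf_sqr => /orP[/eqP ab|/eqP ab]; first by rewrite ab in m12.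
  rewrite {}ab in m12 isoM'; apply: not_siso_B2_B2N isoM'.
  by apply/eqP => b0; apply: m12; rewrite b0 oppr0.
- by move=> a21; apply: not_siso_B2_B2t isoM.
- by move/eqP; rewrite oner_eq0.
- by move/esym => b21; apply: not_siso_B2_B2t isoM'.
Qed.
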